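(* Let $(x_i,y_i)_{i=1}^9$ be any nine point pairs in $\mathbb P^2_x\times\mathbb P^2_y$ and $Z$ the $9\times 9$ matrix with rows $x_i^\top\otimes y_i^\top$. Then $Z$ is rank deficient if and only if there is a nonzero matrix $T\in\mathbb C^{3\times 3}$ (a possibly singular projective transformation $\mathbb P^2_x\dashrightarrow\mathbb P^2_y$) such that $y_i^\top(Tx_i)=0$ for all $i=1,\dots,9$, equivalently, $y_i$ lies on the line with normal vector $Tx_i$ for all $i$. Moreover, for such a $T$: (1) if $\operatorname{rank}T=1$, there exist a line $\ell\subset\mathbb P^2_x$ and a line $\ell'\subset\mathbb P^2_y$ such that for each $i$, $x_i\in\ell$ or $y_i\in\ell'$ (possibly both); (2) if $\operatorname{rank}T=2$, there are points $e\in\mathbb P^2_x$ and $e'\in\mathbb P^2_y$ (generating the right and left nullspaces of $T$) and a $\mathbb P^1$-homography sending the pencil of lines through $e$ to the pencil of lines through $e'$ such that the line $\ell_{ex_i}$ is sent to the line $\ell_{e'y_i}$ for each $i$; (3) if $\operatorname{rank}T=3$, then $T\in\mathrm{PGL}(3)$ and $y_i$ lies on the line with normal vector $Tx_i$ for each $i$.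
   Context: Work over $\mathbb C$. The line with normal vector $n\in\mathbb C^3\setminus\{0\}$ is $\{u\in\mathbb P^2:u^\top n=0\}$. For distinct points $a,b$, $\ell_{ab}$ denotes the line through $a$ and $b$. *)

(* Complex numbers are modelled as R[i] = complex R for a
   real field R : realType (e.g. the classical reals). *)
From HB Require Import structures.
From mathcomp Require Import all_boot all_order all_algebra.
From mathcomp Require Export complex mxtens reals.
Set Implicit Arguments.
Unset Strict Implicit.
Unset Printing Implicit Defensive.
Import Order.TTheory GRing.Theory Num.Theory.
Local Open Scope ring_scope.

(* Points of P^2 and normal vectors of lines are represented by column
   vectors in C^3 (nonzero, up to scaling). *)

Definition dotv (C : pzRingType) (u n : 'cV[C]_3) : C := (u^T *m n) 0 0.

Definition Zmat (C : pzRingType) (x y : 'I_9 -> 'cV[C]_3) : 'M[C]_(9, 3 * 3) :=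
  \matrix_(i < 9, j < 3 * 3) ((x i)^T *t (y i)^T) 0 j.

Definition on_line (C : pzRingType) (u n : 'cV[C]_3) : Prop := dotv u n = 0.

Definition distinct_pts (C : fieldType) (a b : 'cV[C]_3) : Prop :=
  \rank (row_mx a b) = 2%N.

Definition normal_of_line_through (C : pzRingType) (n a b : 'cV[C]_3) : Prop :=
  n != 0 /\ on_line a n /\ on_line b n.

(* H (acting on normal vectors) induces a P^1-homography from the pencil of
   lines through e to the pencil of lines through e': it maps the
   2-dimensional space of normals of lines through e injectively (hence
   bijectively) into the space of normals of lines through e'. *)
Definition pencil_homography (C : pzRingType) (e e' : 'cV[C]_3) (H : 'M[C]_3)
  : Prop :=
  (forall n : 'cV[C]_3, on_line e n -> on_line e' (H *m n)) /\
  (forall n : 'cV[C]_3, on_line e n -> H *m n = 0 -> n = 0).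

(** The entries of [Z *m v] are the bilinear forms [y_i^T T x_i], where [T]
   is the 3 x 3 matrix obtained by reshaping [v]; hence [Z] is rank
   deficient exactly when some nonzero [T] satisfies all nine incidences.
   A rank-one [T = u v^T] splits each incidence into [(y_i . u) (v . x_i) = 0].
   For a rank-two [T] with kernel [e], the map [n |-> T (n x f)], for any [f]
   with [e . f <> 0], sends normals of lines through [e] injectively to normals
   of lines through the left kernel [e'].  If [n] is normal to the line
   [e x_i], then [T^T y_i] and [n] are both orthogonal to [e] and [x_i], so
   both are parallel to [e x x_i] and the triple product [(T^T y_i, n, f)]
   vanishes, i.e. [y_i] lies on the image line. *)
From HB Require Import structures.
From mathcomp Require Import all_boot all_order all_algebra.
From mathcomp Require Import complex mxtens reals.
From mathcomp Require Import ring.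
Import GRing.Theory Num.Theory.
Set Implicit Arguments.
Unset Strict Implicit.
Unset Printing Implicit Defensive.
Local Open Scope ring_scope.
Local Open Scope complex_scope.

Section Cross.
Variable C : comPzRingType.
Implicit Types (a b c u v w : 'cV[C]_3) (T : 'M[C]_3).

Definition i0 : 'I_3 := @Ordinal 3 0 isT.
Definition i1 : 'I_3 := @Ordinal 3 1 isT.
Definition i2 : 'I_3 := @Ordinal 3 2 isT.

Lemma big_ord3 (F : 'I_3 -> C) : \sum_(i < 3) F i = F i0 + F i1 + F i2.
Proof.
rewrite !big_ord_recl big_ord0 addr0 addrA.
by congr (F _ + F _ + F _); apply: val_inj.
Qed.

Lemma col3P u v :
  u i0 0 = v i0 0 -> u i1 0 = v i1 0 -> u i2 0 = v i2 0 -> u = v.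
Proof.
move=> e0 e1 e2; apply/matrixP => -[[|[|[|//]]] ?] j; rewrite (ord1 j).
- by rewrite (_ : Ordinal _ = i0) //; apply: val_inj.
- by rewrite (_ : Ordinal _ = i1) //; apply: val_inj.
- by rewrite (_ : Ordinal _ = i2) //; apply: val_inj.
Qed.

Lemma dotv3 u v : dotv u v = u i0 0 * v i0 0 + u i1 0 * v i1 0 + u i2 0 * v i2 0.
Proof. by rewrite /dotv mxE big_ord3 !mxE. Qed.

Lemma mulmx3 T v i :
  (T *m v) i 0 = T i i0 * v i0 0 + T i i1 * v i1 0 + T i i2 * v i2 0.
Proof. by rewrite mxE big_ord3. Qed.

Lemma dotvC u v : dotv u v = dotv v u.
Proof. by rewrite !dotv3; ring. Qed.

Lemma dotv_mulmxr u v T : dotv u (T *m v) = dotv (T^T *m u) v.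
Proof. by rewrite /dotv trmx_mul trmxK mulmxA. Qed.

Lemma dotv_outer u v a b : dotv u (a *m b^T *m v) = dotv u a * dotv b v.
Proof.
by rewrite /dotv !mulmxA -[_ *m b^T *m v]mulmxA {1}[u^T *m a]mx11_scalar mul_scalar_mx mxE.
Qed.

Definition cross a b : 'cV[C]_3 :=
  \col_i (if val i == 0%N then a i1 0 * b i2 0 - a i2 0 * b i1 0
          else if val i == 1%N then a i2 0 * b i0 0 - a i0 0 * b i2 0
          else a i0 0 * b i1 0 - a i1 0 * b i0 0).

Lemma cross0 a b : cross a b i0 0 = a i1 0 * b i2 0 - a i2 0 * b i1 0.
Proof. by rewrite mxE. Qed.
Lemma cross1 a b : cross a b i1 0 = a i2 0 * b i0 0 - a i0 0 * b i2 0.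
Proof. by rewrite mxE. Qed.
Lemma cross2 a b : cross a b i2 0 = a i0 0 * b i1 0 - a i1 0 * b i0 0.
Proof. by rewrite mxE. Qed.

Definition crossE := (cross0, cross1, cross2).

Lemma cross_cross a b c : cross a (cross b c) = dotv a c *: b - dotv a b *: c.
Proof. by apply: col3P; rewrite !crossE !mxE ?crossE !dotv3; ring. Qed.

Lemma crossvv a : cross a a = 0.
Proof. by apply: col3P; rewrite !(crossE, mxE); ring. Qed.

Lemma crossvZ a b k : cross a (k *: b) = k *: cross a b.
Proof. by apply: col3P; rewrite !(crossE, mxE); ring. Qed.

Lemma crossv0 a : cross a 0 = 0.
Proof. by apply: col3P; rewrite !(crossE, mxE); ring. Qed.

Definition cross_mx c : 'M[C]_3 := \matrix_(i, j) cross (delta_mx j 0) c i 0.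

Lemma mul_cross_mx c v : cross_mx c *m v = cross v c.
Proof. by apply: col3P; rewrite !mulmx3 !mxE /=; ring. Qed.

(* Binet-Cauchy: a product of two triple products is a 3 x 3 Gram determinant. *)
Lemma dotv_cross_mul a b c u v w :
  dotv a (cross b c) * dotv w (cross u v) =
    dotv a u * (dotv b v * dotv c w - dotv b w * dotv c v)
  - dotv a v * (dotv b u * dotv c w - dotv b w * dotv c u)
  + dotv a w * (dotv b u * dotv c v - dotv b v * dotv c u).
Proof. by rewrite !dotv3 !crossE; ring. Qed.

End Cross.

Section CrossIndependence.
Variable F : fieldType.
Implicit Types (a b u v w : 'cV[F]_3).

Lemma exists_dotv_neq0 v : v != 0 -> exists u, dotv u v != 0.
Proof.
move=> v0; have [j /eqP vj0] : exists j, v j 0 != 0.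
  apply/existsP; apply: contraNT v0 => /existsPn v0.
  by apply/eqP/matrixP => i k; rewrite (ord1 k) mxE; apply/eqP/negPn/v0.
exists (delta_mx j 0); rewrite /dotv mxE (bigD1 j) //= big1 ?addr0.
  by rewrite !mxE !eqxx mul1r; apply/eqP.
by move=> i /negbTE ij; rewrite !mxE ij mul0r.
Qed.

Lemma cross_neq0 a b : a != 0 -> distinct_pts a b -> cross a b != 0.
Proof.
move=> a0 ab; apply/eqP => ab0.
have [u ua] := exists_dotv_neq0 a0.
have /eqP := cross_cross u a b; rewrite ab0 crossv0 eq_sym subr_eq0 => /eqP ba.
set k := dotv u b / dotv u a.
have {}ba : b = k *: a by rewrite /k mulrC -scalerA ba scalerA mulVf // scale1r.
move: ab; rewrite /distinct_pts ba -mul_mx_scalar -[a in row_mx a _]mulmx1.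
rewrite -mul_mx_row => ab.
by have := leq_trans (mxrankM_maxl a (row_mx 1%:M k%:M)) (rank_leq_col a); rewrite ab.
Qed.

(* [u] and [w] are both parallel to [a x b]: in the Gram determinant pairing
   [(u, w, c)] with [(a, b, v)], the [u]- and [w]-rows vanish off the [v]-column. *)
Lemma dotv_cross_perp a b u w c :
  a != 0 -> distinct_pts a b ->
  dotv u a = 0 -> dotv u b = 0 -> dotv w a = 0 -> dotv w b = 0 ->
  dotv u (cross w c) = 0.
Proof.
move=> a0 ab ua ub wa wb.
have [v vab] := exists_dotv_neq0 (cross_neq0 a0 ab).
have := dotv_cross_mul u w c a b v.
rewrite ua ub wa wb !mul0r !subrr mulr0 addr0 => /eqP.
by rewrite mulf_eq0 (negbTE vab) orbF => /eqP.
Qed.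

End CrossIndependence.

Section Kernel.
Variable F : fieldType.

Lemma rank_deficientP m n (A : 'M[F]_(m, n)) :
  reflect (exists2 v : 'cV_n, v != 0 & A *m v = 0) (\rank A < n)%N.
Proof.
rewrite -mxrank_tr ltn_neqAle rank_leq_row andbT.
rewrite -[_ != n]/(~~ row_free A^T) -kermx_eq0.
apply: (iffP rowV0Pn) => [[r /sub_kermxP rA r0]|[v v0 Av]].
  by exists r^T; rewrite ?trmx_eq0 // -[A]trmxK -trmx_mul rA trmx0.
by exists v^T; rewrite ?trmx_eq0 //; apply/sub_kermxP; rewrite -trmx_mul Av trmx0.
Qed.

Lemma kernel_rank1 m n (A : 'M[F]_(m, n)) (e : 'cV_n) :
  (\rank A).+1 = n -> e != 0 -> A *m e = 0 ->
  forall z, A *m z = 0 -> exists k, z = k *: e.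
Proof.
move=> rA e0 Ae z Az.
have inK (v : 'cV_n) : A *m v = 0 -> (v^T <= kermx A^T)%MS.
  by move=> Av; apply/sub_kermxP; rewrite -trmx_mul Av trmx0.
have rK : \rank (kermx A^T) = \rank e^T.
  have -> : (\rank (kermx A^T) = 1)%N.
    by rewrite mxrank_ker mxrank_tr; move: (\rank A) rA => r <-; rewrite subSnn.
  by apply/eqP; rewrite eqn_leq rank_leq_row andbT lt0n mxrank_eq0 trmx_eq0.
have Ke : (kermx A^T <= e^T)%MS by rewrite -(mxrank_leqif_sup (inK e Ae)).2 rK.
have /submxP[D zD] := submx_trans (inK z Az) Ke.
exists (D 0 0); apply: trmx_inj; rewrite zD [D]mx11_scalar mul_scalar_mx.
by apply/matrixP => i j; rewrite !mxE.
Qed.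

Lemma rank1_outer m n (A : 'M[F]_(m, n)) : \rank A = 1%N ->
  exists (a : 'cV_m) (b : 'cV_n), [/\ a != 0, b != 0 & A = a *m b^T].
Proof.
move=> rA; have /rowV0Pn[r rA' r0] : A != 0 by rewrite -mxrank_eq0 rA.
have rr : \rank r = \rank A.
  by apply/eqP; rewrite rA eqn_leq rank_leq_row lt0n mxrank_eq0.
have /submxP[D AD] : (A <= r)%MS by rewrite -(mxrank_leqif_sup rA').2 rr.
exists D, r^T; rewrite trmxK trmx_eq0; split=> //.
by apply/eqP => D0; move: rA; rewrite AD D0 mul0mx mxrank0.
Qed.

End Kernel.

Section Reshape.
Variable C : comPzRingType.

(* [v] is read as the coefficients of [x^T (x) y^T], so [T] is indexed as
   [T b a = v (a, b)] to make [y^T T x] the corresponding bilinear form. *)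
Definition mx_of_vec (v : 'cV[C]_(3 * 3)) : 'M[C]_3 :=
  \matrix_(b, a) v (mxtens_index (a, b)) 0.

Definition vec_of_mx (T : 'M[C]_3) : 'cV[C]_(3 * 3) :=
  \col_j T (mxtens_unindex j).2 (mxtens_unindex j).1.

Lemma vec_of_mxK : cancel vec_of_mx mx_of_vec.
Proof. by move=> T; apply/matrixP => i j; rewrite !mxE mxtens_indexK. Qed.

Lemma mx_of_vecK : cancel mx_of_vec vec_of_mx.
Proof.
move=> v; apply/matrixP => i j; rewrite (ord1 j) !mxE.
by rewrite -surjective_pairing mxtens_unindexK.
Qed.

Lemma mx_of_vec_eq0 v : (mx_of_vec v == 0) = (v == 0).
Proof.
apply/eqP/eqP => [v0|->]; last by apply/matrixP => i j; rewrite !mxE.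
by rewrite -[v]mx_of_vecK v0; apply/matrixP => i j; rewrite !mxE.
Qed.

Lemma Zmat_mulmx (x y : 'I_9 -> 'cV[C]_3) v k :
  (Zmat x y *m v) k 0 = dotv (y k) (mx_of_vec v *m x k).
Proof.
rewrite /dotv !mxE (reindex (@mxtens_index 3 3)) /=; last first.
  by exists (@mxtens_unindex 3 3) => ? _; [apply: mxtens_indexK | apply: mxtens_unindexK].
under eq_bigr do rewrite !mxE mxtens_indexK.
under [RHS]eq_bigr do rewrite !mxE big_distrr.
rewrite exchange_big pair_big /=; apply: eq_bigr => -[a b] _ /=.
have col0 (u : 'cV[C]_3) c (i : 'I_1) : u c i = u c 0 by rewrite (ord1 i).
by rewrite !mxE [x k a _]col0 [y k b _]col0; ring.
Qed.

End Reshape.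

Section Incidence.
Variable F : fieldType.
Implicit Types (e f x y n : 'cV[F]_3) (T : 'M[F]_3).

Lemma Zmat_rank_deficientP (x y : 'I_9 -> 'cV[F]_3) :
  (\rank (Zmat x y) < 9)%N <->
    exists T, T != 0 /\ forall k, dotv (y k) (T *m x k) = 0.
Proof.
split=> [/rank_deficientP[v v0 Zv]|[T [T0 hT]]].
  exists (mx_of_vec v); rewrite mx_of_vec_eq0; split=> // k.
  by rewrite -Zmat_mulmx Zv mxE.
apply/rank_deficientP; exists (vec_of_mx T); first by rewrite -mx_of_vec_eq0 vec_of_mxK.
by apply/matrixP => k j; rewrite (ord1 j) Zmat_mulmx vec_of_mxK hT mxE.
Qed.

Lemma rank1_incidence_lines T : \rank T = 1%N ->
  exists l l', l != 0 /\ l' != 0 /\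
    forall x y, dotv y (T *m x) = 0 -> on_line x l \/ on_line y l'.
Proof.
move/rank1_outer => [a [b [a0 b0 ->]]]; exists b, a; do 2!split=> //.
move=> x y /eqP; rewrite dotv_outer mulf_eq0 => /orP[] /eqP; first by right.
by rewrite dotvC; left.
Qed.

Lemma dotv0 x : dotv x 0 = 0.
Proof. by rewrite /dotv mulmx0 mxE. Qed.

Lemma cross_mx_pencil_homography T e (e' : 'cV[F]_3) f :
  (forall z, T *m z = 0 -> exists k, z = k *: e) -> e'^T *m T = 0 ->
  dotv e f != 0 -> pencil_homography e e' (T *m cross_mx f).
Proof.
move=> kerT e'T ef; split=> n; rewrite -mulmxA mul_cross_mx.
  by move=> _; rewrite /on_line /dotv mulmxA e'T mul0mx mxE.
move=> ne /kerT[k nf]; have /esym/eqP := cross_cross e n f.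
rewrite nf crossvZ crossvv scaler0 ne scale0r subr0 scaler_eq0.
by rewrite (negbTE ef) => /eqP.
Qed.

Lemma cross_mx_incidence T e f x y n :
  e != 0 -> T *m e = 0 -> distinct_pts e x -> dotv y (T *m x) = 0 ->
  on_line e n -> on_line x n -> on_line y (T *m cross_mx f *m n).
Proof.
move=> e0 Te ex Txy ne nx; rewrite /on_line -mulmxA mul_cross_mx dotv_mulmxr.
apply: (dotv_cross_perp f e0 ex); rewrite -?dotv_mulmxr ?Te ?dotv0 //.
  by rewrite dotvC.
by rewrite dotvC.
Qed.

Lemma rank2_pencil_homography T : \rank T = 2%N ->
  exists e e' H, [/\ e != 0 /\ e' != 0, T *m e = 0, e'^T *m T = 0,
    pencil_homography e e' H &
    forall x y, dotv y (T *m x) = 0 -> distinct_pts e x ->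
      forall n, normal_of_line_through n e x -> normal_of_line_through (H *m n) e' y].
Proof.
move=> rT.
have [e e0 Te] : exists2 e : 'cV[F]_3, e != 0 & T *m e = 0 by apply/rank_deficientP; rewrite rT.
have [e' e'0 Te'] : exists2 e' : 'cV[F]_3, e' != 0 & T^T *m e' = 0.
  by apply/rank_deficientP; rewrite mxrank_tr rT.
have e'T : e'^T *m T = 0 by rewrite -[T]trmxK -trmx_mul Te' trmx0.
have [f] := exists_dotv_neq0 e0; rewrite dotvC => ef.
have rT1 : (\rank T).+1 = 3%N by rewrite rT.
have hH := cross_mx_pencil_homography (kernel_rank1 rT1 e0 Te) e'T ef.
exists e, e', (T *m cross_mx f); split=> // x y Txy ex n [n0 [ne nx]].
split; last by split; [apply: hH.1 ne | apply: cross_mx_incidence e0 Te ex Txy ne nx].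
by apply: contra n0 => /eqP /(hH.2 _ ne) ->.
Qed.

End Incidence.

Theorem mainTheorem4 (R : realType) (x y : 'I_9 -> 'cV[R[i]]_3)
  (hx : forall k, x k != 0) (hy : forall k, y k != 0) :
  ((\rank (Zmat x y) < 9)%N <->
     exists T : 'M[R[i]]_3, T != 0 /\ forall k, dotv (y k) (T *m x k) = 0)
  /\
  (forall T : 'M[R[i]]_3, T != 0 ->
     (forall k, dotv (y k) (T *m x k) = 0) ->
     (* (1) *)
     (\rank T = 1%N ->
        exists l l' : 'cV[R[i]]_3, l != 0 /\ l' != 0 /\
          forall k, on_line (x k) l \/ on_line (y k) l')
     /\
     (* (2) *)
     (\rank T = 2%N ->
        exists (e e' : 'cV[R[i]]_3) (H : 'M[R[i]]_3),
          [/\ e != 0 /\ e' != 0, T *m e = 0, e'^T *m T = 0,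
              pencil_homography e e' H &
              forall k, distinct_pts e (x k) -> distinct_pts e' (y k) ->
                forall n, normal_of_line_through n e (x k) ->
                  normal_of_line_through (H *m n) e' (y k)])
     /\
     (* (3) *)
     (\rank T = 3%N ->
        T \in unitmx /\ forall k, on_line (y k) (T *m x k))).
Proof.
split; first exact: Zmat_rank_deficientP.
move=> T _ hT; split; [|split].
- move/rank1_incidence_lines => [l [l' [l0 [l'0 hl]]]].
  by exists l, l'; do 2!split=> //; move=> k; apply: hl.
- move/rank2_pencil_homography => [e [e' [H [ee' Te e'T hH hinc]]]].
  by exists e, e', H; split=> // k ex _; apply: hinc.
- by move=> rT; rewrite -row_free_unit /row_free rT.
Qed.
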